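(* Let $q=2^n$ with $n\ge 2$. Then at most $\phi(\phi(q))+2$ of the numbers in the set $\{H_{a/q}: 1\le a\le q\}$ are linearly independent over $\overline{\mathbb{Q}}$; that is, the $\overline{\mathbb{Q}}$-linear span of this set has dimension at most $\phi(\phi(q))+2$.
   Context: $\phi$ is Euler's totient function and $\overline{\mathbb{Q}}$ is the field of algebraic numbers. For a complex number $r$ which is not a negative integer, $H_r=r\sum_{k=1}^{\infty}\frac{1}{k(r+k)}$; for $1\le a\le q$ it satisfies Gauss's formula $H_{a/q}=\frac qa-\log(2q)-\frac{\pi}{2}\cot(\pi a/q)+2\sum_{n=1}^{\lfloor (q-1)/2\rfloor}\cos(2\pi n a/q)\log\sin(\pi n/q)$. *)

From Stdlib Require Import Reals ZArith List Arith.
Open Scope R_scope.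

Definition totient (m : nat) : nat :=
  length (filter (fun k => Nat.eqb (Nat.gcd k m) 1) (seq 1 m)).

Definition Cx : Type := (R * R)%type.
Definition Cadd (z w : Cx) : Cx := (fst z + fst w, snd z + snd w).
Definition Cmul (z w : Cx) : Cx :=
  (fst z * fst w - snd z * snd w, fst z * snd w + snd z * fst w).
Definition C0 : Cx := (0, 0).
Definition RtoC (x : R) : Cx := (x, 0).

(* Horner evaluation of an integer-coefficient polynomial
   p = [c0; c1; ...; cd]  (c0 + c1 z + ... + cd z^d). *)
Definition Cpoly_eval (p : list Z) (z : Cx) : Cx :=
  fold_right (fun c acc => Cadd (RtoC (IZR c)) (Cmul z acc)) C0 p.

(* z is an algebraic number: root of a nonzero polynomial with integer
   (equivalently rational) coefficients. *)
Definition algebraic (z : Cx) : Prop :=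
  exists p : list Z, Exists (fun c => c <> 0%Z) p /\ Cpoly_eval p z = C0.

Definition Clincomb (s : list nat) (c : nat -> Cx) (x : nat -> R) : Cx :=
  fold_right (fun i acc => Cadd (Cmul (c i) (RtoC (x i))) acc) C0 s.

Definition H_term (r : R) (k : nat) : R :=
  / (INR (S k) * (r + INR (S k))).

Definition is_H (r h : R) : Prop :=
  exists S : R, infinite_sum (H_term r) S /\ h = r * S.

From Stdlib Require Import Reals ZArith List Arith Lra Lia.
From Stdlib Require Import ClassicalEpsilon.
Open Scope R_scope.

(* Write q = 2^n = 4f, so that f = 2^(n-2) = phi(phi(q)).  The series defining H gives the
   duplication formula H_(2x) = (H_x + H_(x+1/2))/2 + 1 - H_(1/2)/2 - 1/(2x+1) and the reflection
   formula H_(1-x) = H_x - 1/x + 1/(1-x) + pi cot(pi x), the latter through the partial-fraction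
   expansion of pi cot(pi x).  Descending along the 2-adic valuation of a, these relations write
   every H_(a/q) as a rational combination of the f + 1 numbers 1, H_(1/2), H_(1/q), ...,
   H_((f-1)/q), plus pi times a rational combination of the algebraic numbers cot(pi b/q).  Among
   any f + 3 of the values, two independent rational relations annihilate the first part, and a
   suitable algebraic combination of the two annihilates the pi-part as well. *)

(** * Finite sums and rational dependence *)

Fixpoint sum_lt (m : nat) (g : nat -> R) : R :=
  match m with O => 0 | S m' => sum_lt m' g + g m' end.

Lemma sum_lt_ext m g h : (forall k, (k < m)%nat -> g k = h k) -> sum_lt m g = sum_lt m h.
Proof.
  induction m; intros H; simpl; auto.
  rewrite IHm, H; auto; intros; apply H; lia.
Qed.

Lemma sum_lt_add m g h : sum_lt m (fun k => g k + h k) = sum_lt m g + sum_lt m h.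
Proof. induction m; simpl; [ring | rewrite IHm; ring]. Qed.

Lemma sum_lt_scal m c g : sum_lt m (fun k => c * g k) = c * sum_lt m g.
Proof. induction m; simpl; [ring | rewrite IHm; ring]. Qed.

Lemma sum_lt_eq0 m g : (forall k, (k < m)%nat -> g k = 0) -> sum_lt m g = 0.
Proof.
  induction m; intros H; simpl; auto.
  rewrite IHm, H; [ring | lia | intros; apply H; lia].
Qed.

Lemma sum_lt_succ_l m g : sum_lt (S m) g = g 0%nat + sum_lt m (fun k => g (S k)).
Proof. induction m; simpl in *; [ring | rewrite IHm; ring]. Qed.

Lemma sum_lt_delta m j g : (j < m)%nat ->
  sum_lt m (fun k => (if Nat.eq_dec k j then 1 else 0) * g k) = g j.
Proof.
  induction m; intros Hj; [lia |]. simpl.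
  destruct (Nat.eq_dec m j) as [-> | Hne].
  - rewrite sum_lt_eq0; [ring |]. intros k Hk. destruct (Nat.eq_dec k j); [lia | ring].
  - rewrite IHm by lia. ring.
Qed.

Fixpoint sum_list (s : list nat) (g : nat -> R) : R :=
  match s with nil => 0 | a :: s' => g a + sum_list s' g end.

Lemma sum_list_ext s g h : (forall a, In a s -> g a = h a) -> sum_list s g = sum_list s h.
Proof.
  induction s; intros H; simpl; auto.
  rewrite H by (simpl; auto). rewrite IHs; auto.
  intros; apply H; simpl; auto.
Qed.

Lemma sum_list_add s g h : sum_list s (fun a => g a + h a) = sum_list s g + sum_list s h.
Proof. induction s; simpl; [ring | rewrite IHs; ring]. Qed.

Lemma sum_list_scal s c g : sum_list s (fun a => c * g a) = c * sum_list s g.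
Proof. induction s; simpl; [ring | rewrite IHs; ring]. Qed.

Lemma sum_list_eq0 s g : (forall a, In a s -> g a = 0) -> sum_list s g = 0.
Proof.
  induction s; intros H; simpl; auto.
  rewrite H, IHs; [ring | | simpl; auto]. intros; apply H; simpl; auto.
Qed.

Lemma sum_list_app s t g : sum_list (s ++ t) g = sum_list s g + sum_list t g.
Proof. induction s; simpl; [ring | rewrite IHs; ring]. Qed.

Lemma sum_list_sum_lt s m g :
  sum_list s (fun a => sum_lt m (g a)) = sum_lt m (fun j => sum_list s (fun a => g a j)).
Proof.
  induction s; simpl.
  - symmetry. apply sum_lt_eq0. auto.
  - rewrite IHs, <- sum_lt_add. auto.
Qed.

Lemma sum_list_seq k n g : sum_list (seq k n) g = sum_lt n (fun t => g (k + t)%nat).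
Proof.
  revert k. induction n; intros k; cbn [seq sum_list]; auto.
  rewrite IHn, sum_lt_succ_l, Nat.add_0_r. f_equal. apply sum_lt_ext. intros. f_equal. lia.
Qed.

Definition is_rat (x : R) : Prop := exists z d : Z, d <> 0%Z /\ x = IZR z / IZR d.

Lemma is_rat_IZR z : is_rat (IZR z).
Proof. exists z, 1%Z. split; [lia | field]. Qed.

Lemma is_rat_0 : is_rat 0.
Proof. apply (is_rat_IZR 0). Qed.

Lemma is_rat_1 : is_rat 1.
Proof. apply (is_rat_IZR 1). Qed.

Lemma is_rat_INR n : is_rat (INR n).
Proof. rewrite INR_IZR_INZ. apply is_rat_IZR. Qed.

Lemma is_rat_add x y : is_rat x -> is_rat y -> is_rat (x + y).
Proof.
  intros [a [b [Hb ->]]] [c [d [Hd ->]]]. exists (a * d + c * b)%Z, (b * d)%Z. split; [lia |].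
  apply not_0_IZR in Hb. apply not_0_IZR in Hd. rewrite plus_IZR, !mult_IZR. field. auto.
Qed.

Lemma is_rat_opp x : is_rat x -> is_rat (- x).
Proof.
  intros [a [b [Hb ->]]]. exists (- a)%Z, b. split; auto.
  apply not_0_IZR in Hb. rewrite opp_IZR. field. auto.
Qed.

Lemma is_rat_mul x y : is_rat x -> is_rat y -> is_rat (x * y).
Proof.
  intros [a [b [Hb ->]]] [c [d [Hd ->]]]. exists (a * c)%Z, (b * d)%Z. split; [lia |].
  apply not_0_IZR in Hb. apply not_0_IZR in Hd. rewrite !mult_IZR. field. auto.
Qed.

Lemma is_rat_inv x : is_rat x -> is_rat (/ x).
Proof.
  intros [a [b [Hb ->]]]. destruct (Z.eq_dec a 0) as [-> | Ha].
  - unfold Rdiv. rewrite Rmult_0_l, Rinv_0. exists 0%Z, 1%Z. split; [lia | field].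
  - exists b, a. split; auto. apply not_0_IZR in Hb. apply not_0_IZR in Ha. field. auto.
Qed.

Lemma is_rat_div x y : is_rat x -> is_rat y -> is_rat (x / y).
Proof. intros. apply is_rat_mul, is_rat_inv; auto. Qed.

Lemma is_rat_sub x y : is_rat x -> is_rat y -> is_rat (x - y).
Proof. intros. apply is_rat_add, is_rat_opp; auto. Qed.

Lemma is_rat_half : is_rat (/ 2).
Proof. apply is_rat_inv, (is_rat_IZR 2). Qed.

Lemma is_rat_ratio m n : is_rat (INR m / INR n).
Proof. apply is_rat_div; apply is_rat_INR. Qed.

Lemma is_rat_sum_list s g : (forall a, In a s -> is_rat (g a)) -> is_rat (sum_list s g).
Proof.
  induction s; intros H; simpl; [apply is_rat_0 |].
  apply is_rat_add; [apply H | apply IHs; intros; apply H]; simpl; auto.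
Qed.

Lemma NoDup_split_at s a : NoDup s -> In a s ->
  exists s', NoDup s' /\ length s = S (length s') /\ (forall b, In b s' -> In b s /\ b <> a) /\
    forall g, sum_list s g = g a + sum_list s' g.
Proof.
  intros Hnd Ha. destruct (in_split a s Ha) as [l1 [l2 ->]].
  exists (l1 ++ l2). split; [| split; [| split]].
  - exact (NoDup_remove_1 _ _ _ Hnd).
  - rewrite !length_app. simpl. lia.
  - intros b Hb. split.
    + apply in_or_app. apply in_app_or in Hb as [Hb | Hb]; simpl; auto.
    + intros ->. exact (NoDup_remove_2 _ _ _ Hnd Hb).
  - intros g. rewrite !sum_list_app. simpl. ring.
Qed.

Lemma rational_dependence m : forall (s : list nat) (v : nat -> nat -> R),
  NoDup s -> (forall a j, is_rat (v a j)) -> (m < length s)%nat ->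
  exists lam : nat -> R, (forall a, is_rat (lam a)) /\ (exists a, In a s /\ lam a <> 0) /\
    forall j, (j < m)%nat -> sum_list s (fun a => lam a * v a j) = 0.
Proof.
  induction m; intros s v Hnd Hv Hlen.
  - destruct s as [| a0 s]; [simpl in Hlen; lia |].
    exists (fun a => if Nat.eq_dec a a0 then 1 else 0). split; [| split].
    + intros a. destruct (Nat.eq_dec a a0); [apply is_rat_1 | apply is_rat_0].
    + exists a0. split; [simpl; auto |]. destruct (Nat.eq_dec a0 a0); [lra | congruence].
    + intros; lia.
  - destruct (classic (exists a0, In a0 s /\ v a0 m <> 0)) as [[a0 [Ha0 Hpiv]] | Hno].
    + destruct (NoDup_split_at s a0 Hnd Ha0) as [s' [Hnd' [Hlen' [Hin' Hsum]]]].
      set (w := fun a j => v a j - v a m / v a0 m * v a0 j).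
      destruct (IHm s' w Hnd') as [lam' [Hq [[a1 [Ha1 Hnz]] Hrel]]].
      { intros a j. apply is_rat_sub; [| apply is_rat_mul; [apply is_rat_div |]]; auto. }
      { lia. }
      set (c0 := - sum_list s' (fun b => lam' b * v b m) / v a0 m).
      exists (fun a => if Nat.eq_dec a a0 then c0 else lam' a). split; [| split].
      * intros a. destruct (Nat.eq_dec a a0); auto.
        apply is_rat_div, Hv. apply is_rat_opp, is_rat_sum_list. intros; apply is_rat_mul; auto.
      * exists a1. destruct (Hin' a1 Ha1) as [Ha1s Hne]. split; auto.
        destruct (Nat.eq_dec a1 a0); [congruence | auto].
      * intros j Hj. rewrite Hsum. destruct (Nat.eq_dec a0 a0) as [_ |]; [| congruence].
        rewrite (sum_list_ext s' _ (fun a => lam' a * v a j)).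
        2: { intros a Ha. destruct (Hin' a Ha) as [_ Hne]. destruct (Nat.eq_dec a a0); [congruence | auto]. }
        unfold c0. destruct (Nat.eq_dec j m) as [-> | Hjm].
        -- field. auto.
        -- rewrite (sum_list_ext s' (fun a => lam' a * v a j)
              (fun a => lam' a * w a j + v a0 j / v a0 m * (lam' a * v a m))).
           2: { intros a _. unfold w. field. auto. }
           rewrite sum_list_add, sum_list_scal, Hrel by lia. field. auto.
    + destruct (IHm s v Hnd Hv) as [lam [Hq [Hnz Hrel]]]; [lia |].
      exists lam. split; [| split]; auto. intros j Hj.
      destruct (Nat.eq_dec j m) as [-> | Hjm]; [| apply Hrel; lia].
      apply sum_list_eq0. intros a Ha. destruct (Req_dec (v a m) 0) as [E | E].
      * rewrite E. ring.
      * exfalso. apply Hno. eauto.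
Qed.

(** * Algebraicity of the cotangents cot(pi b/q) *)

Definition pi_over (q : nat) : R := PI / INR q.

Definition trig_basis (q k : nat) : R :=
  if Nat.ltb k (2 * q) then cos (INR k * pi_over q) else sin (INR (k - 2 * q) * pi_over q).

Definition in_trig_space (q : nat) (y : R) : Prop :=
  exists c : nat -> R, (forall k, is_rat (c k)) /\
    y = sum_lt (4 * q) (fun k => c k * trig_basis q k).

Lemma in_trig_space_0 q : in_trig_space q 0.
Proof.
  exists (fun _ => 0). split; [intros; apply is_rat_0 |].
  symmetry. apply sum_lt_eq0. intros; ring.
Qed.

Lemma in_trig_space_add q x y : in_trig_space q x -> in_trig_space q y -> in_trig_space q (x + y).
Proof.
  intros [c [Hc ->]] [d [Hd ->]]. exists (fun k => c k + d k).
  split; [intros; apply is_rat_add; auto |].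
  rewrite <- sum_lt_add. apply sum_lt_ext. intros; ring.
Qed.

Lemma in_trig_space_scal q r x : is_rat r -> in_trig_space q x -> in_trig_space q (r * x).
Proof.
  intros Hr [c [Hc ->]]. exists (fun k => r * c k). split; [intros; apply is_rat_mul; auto |].
  rewrite <- sum_lt_scal. apply sum_lt_ext. intros; ring.
Qed.

Lemma in_trig_space_basis q k : (k < 4 * q)%nat -> in_trig_space q (trig_basis q k).
Proof.
  intros Hk. exists (fun j => if Nat.eq_dec j k then 1 else 0). split.
  - intros j. destruct (Nat.eq_dec j k); [apply is_rat_1 | apply is_rat_0].
  - rewrite sum_lt_delta; auto.
Qed.

Lemma in_trig_space_sum_lt q m g :
  (forall k, (k < m)%nat -> in_trig_space q (g k)) -> in_trig_space q (sum_lt m g).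
Proof.
  induction m; intros H; simpl; [apply in_trig_space_0 |].
  apply in_trig_space_add; auto.
Qed.

Lemma angle_mod_period q z : (1 <= q)%nat ->
  exists r t, (r < 2 * q)%nat /\ INR z * pi_over q = INR r * pi_over q + 2 * INR t * PI.
Proof.
  intros Hq. exists (z mod (2 * q))%nat, (z / (2 * q))%nat. split; [apply Nat.mod_upper_bound; lia |].
  assert (Hq0 : 0 < INR q) by (apply lt_0_INR; lia).
  rewrite (Nat.div_mod z (2 * q)) at 1 by lia.
  rewrite plus_INR, !mult_INR. unfold pi_over. simpl. field. lra.
Qed.

Lemma in_trig_space_cos q z : (1 <= q)%nat -> in_trig_space q (cos (INR z * pi_over q)).
Proof.
  intros Hq. destruct (angle_mod_period q z Hq) as [r [t [Hr ->]]]. rewrite cos_period.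
  replace (cos (INR r * pi_over q)) with (trig_basis q r); [apply in_trig_space_basis; lia |].
  unfold trig_basis. destruct (Nat.ltb_spec r (2 * q)); [auto | lia].
Qed.

Lemma in_trig_space_sin q z : (1 <= q)%nat -> in_trig_space q (sin (INR z * pi_over q)).
Proof.
  intros Hq. destruct (angle_mod_period q z Hq) as [r [t [Hr ->]]]. rewrite sin_period.
  replace (sin (INR r * pi_over q)) with (trig_basis q (r + 2 * q)); [apply in_trig_space_basis; lia |].
  unfold trig_basis. destruct (Nat.ltb_spec (r + 2 * q) (2 * q)); [lia |].
  do 3 f_equal. lia.
Qed.

Lemma in_trig_space_cos_diff q j k : (1 <= q)%nat ->
  in_trig_space q (cos ((INR j - INR k) * pi_over q)).
Proof.
  intros Hq. destruct (le_lt_dec k j).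
  - rewrite <- minus_INR by auto. apply in_trig_space_cos; auto.
  - replace ((INR j - INR k) * pi_over q) with (- (INR (k - j) * pi_over q))
      by (rewrite minus_INR by lia; ring).
    rewrite cos_neg. apply in_trig_space_cos; auto.
Qed.

Lemma in_trig_space_sin_diff q j k : (1 <= q)%nat ->
  in_trig_space q (sin ((INR j - INR k) * pi_over q)).
Proof.
  intros Hq. destruct (le_lt_dec k j).
  - rewrite <- minus_INR by auto. apply in_trig_space_sin; auto.
  - replace ((INR j - INR k) * pi_over q) with (- (INR (k - j) * pi_over q))
      by (rewrite minus_INR by lia; ring).
    rewrite sin_neg, <- (Rmult_1_l (sin _)), Ropp_mult_distr_l.
    apply in_trig_space_scal; [apply is_rat_opp, is_rat_1 | apply in_trig_space_sin; auto].
Qed.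

Definition trig_space_stable (q : nat) (x : R) : Prop :=
  forall y, in_trig_space q y -> in_trig_space q (x * y).

Lemma trig_space_stable_of_basis q x :
  (forall k, (k < 4 * q)%nat -> in_trig_space q (x * trig_basis q k)) -> trig_space_stable q x.
Proof.
  intros H y [c [Hc ->]]. rewrite <- sum_lt_scal. apply in_trig_space_sum_lt. intros k Hk.
  replace (x * (c k * trig_basis q k)) with (c k * (x * trig_basis q k)) by ring.
  apply in_trig_space_scal; auto.
Qed.

Lemma trig_space_stable_0 q : trig_space_stable q 0.
Proof. intros y _. rewrite Rmult_0_l. apply in_trig_space_0. Qed.

Lemma trig_space_stable_add q x y :
  trig_space_stable q x -> trig_space_stable q y -> trig_space_stable q (x + y).
Proof. intros Hx Hy z Hz. rewrite Rmult_plus_distr_r. apply in_trig_space_add; auto. Qed.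

Lemma trig_space_stable_mul q x y :
  trig_space_stable q x -> trig_space_stable q y -> trig_space_stable q (x * y).
Proof. intros Hx Hy z Hz. rewrite Rmult_assoc. auto. Qed.

Lemma trig_space_stable_scal q r x :
  is_rat r -> trig_space_stable q x -> trig_space_stable q (r * x).
Proof. intros Hr Hx z Hz. rewrite Rmult_assoc. apply in_trig_space_scal; auto. Qed.

Lemma trig_space_stable_sum_lt q m g :
  (forall k, (k < m)%nat -> trig_space_stable q (g k)) -> trig_space_stable q (sum_lt m g).
Proof.
  induction m; intros H; simpl; [apply trig_space_stable_0 |].
  apply trig_space_stable_add; auto.
Qed.

Lemma trig_space_stable_cos q j : (1 <= q)%nat -> trig_space_stable q (cos (INR j * pi_over q)).
Proof.
  intros Hq. apply trig_space_stable_of_basis. intros k _. unfold trig_basis.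
  set (x := INR j * pi_over q).
  destruct (Nat.ltb k (2 * q)); [set (k' := k) | set (k' := (k - 2 * q)%nat)];
    set (y := INR k' * pi_over q);
    assert (Hs : x + y = INR (j + k') * pi_over q) by (unfold x, y; rewrite plus_INR; ring);
    assert (Hd : x - y = (INR j - INR k') * pi_over q) by (unfold x, y; ring).
  - replace (cos x * cos y) with (/ 2 * cos (x + y) + / 2 * cos (x - y))
      by (rewrite cos_plus, cos_minus; field).
    rewrite Hs, Hd. apply in_trig_space_add; apply in_trig_space_scal; try apply is_rat_half.
    + apply in_trig_space_cos; auto.
    + apply in_trig_space_cos_diff; auto.
  - replace (cos x * sin y) with (/ 2 * sin (x + y) + - / 2 * sin (x - y))
      by (rewrite sin_plus, sin_minus; field).
    rewrite Hs, Hd. apply in_trig_space_add; apply in_trig_space_scal; try apply is_rat_opp; try apply is_rat_half.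
    + apply in_trig_space_sin; auto.
    + apply in_trig_space_sin_diff; auto.
Qed.

Lemma trig_space_stable_sin q j : (1 <= q)%nat -> trig_space_stable q (sin (INR j * pi_over q)).
Proof.
  intros Hq. apply trig_space_stable_of_basis. intros k _. unfold trig_basis.
  set (x := INR j * pi_over q).
  destruct (Nat.ltb k (2 * q)); [set (k' := k) | set (k' := (k - 2 * q)%nat)];
    set (y := INR k' * pi_over q);
    assert (Hs : x + y = INR (j + k') * pi_over q) by (unfold x, y; rewrite plus_INR; ring);
    assert (Hd : x - y = (INR j - INR k') * pi_over q) by (unfold x, y; ring).
  - replace (sin x * cos y) with (/ 2 * sin (x + y) + / 2 * sin (x - y))
      by (rewrite sin_plus, sin_minus; field).
    rewrite Hs, Hd. apply in_trig_space_add; apply in_trig_space_scal; try apply is_rat_half.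
    + apply in_trig_space_sin; auto.
    + apply in_trig_space_sin_diff; auto.
  - replace (sin x * sin y) with (/ 2 * cos (x - y) + - / 2 * cos (x + y))
      by (rewrite cos_plus, cos_minus; field).
    rewrite Hs, Hd. apply in_trig_space_add; apply in_trig_space_scal; try apply is_rat_opp; try apply is_rat_half.
    + apply in_trig_space_cos_diff; auto.
    + apply in_trig_space_cos; auto.
Qed.

Lemma sum_cos_even_multiples th M :
  2 * sin th * sum_lt M (fun m => cos (2 * INR m * th)) = sin ((2 * INR M - 1) * th) + sin th.
Proof.
  induction M; simpl sum_lt.
  - simpl. replace ((2 * 0 - 1) * th) with (- th) by ring. rewrite sin_neg. ring.
  - rewrite S_INR, Rmult_plus_distr_l, IHM.
    replace ((2 * (INR M + 1) - 1) * th) with (2 * INR M * th + th) by ring.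
    replace ((2 * INR M - 1) * th) with (2 * INR M * th - th) by ring.
    rewrite sin_plus, sin_minus. ring.
Qed.

Lemma sum_weighted_sin_odd_multiples th M :
  2 * sin th * sum_lt M (fun m => INR m * sin ((2 * INR m + 1) * th))
  = sum_lt M (fun m => cos (2 * INR m * th)) - 1 - (INR M - 1) * cos (2 * INR M * th).
Proof.
  induction M; simpl sum_lt.
  - simpl. replace (2 * 0 * th) with 0 by ring. rewrite cos_0. ring.
  - rewrite S_INR, Rmult_plus_distr_l, IHM.
    replace (2 * (INR M + 1) * th) with ((2 * INR M + 1) * th + th) by ring.
    replace (2 * INR M * th) with ((2 * INR M + 1) * th - th) by ring.
    rewrite cos_plus, cos_minus. ring.
Qed.

Definition cot_ratio (q b : nat) : R := cos (PI * INR b / INR q) / sin (PI * INR b / INR q).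

(* With th = b pi / q, the two sums above give sum_(m<q) m sin((2m+1) th) = - q / (2 sin th). *)
Lemma cot_ratio_expansion q b : (0 < b < q)%nat ->
  cot_ratio q b = sum_lt q (fun m => - 2 * INR m / INR q *
    (cos (INR b * pi_over q) * sin (INR ((2 * m + 1) * b) * pi_over q))).
Proof.
  intros Hb.
  assert (Hq0 : 0 < INR q) by (apply lt_0_INR; lia).
  assert (Hbq : INR b < INR q) by (apply lt_INR; lia).
  assert (Hb0 : 0 < INR b) by (apply lt_0_INR; lia).
  pose proof PI_RGT_0.
  set (th := INR b * pi_over q).
  assert (Eth : PI * INR b / INR q = th) by (unfold th, pi_over; field; lra).
  assert (Hs : 0 < sin th).
  { apply sin_gt_0; unfold th, pi_over.
    - apply Rmult_lt_0_compat; auto. apply Rdiv_lt_0_compat; auto.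
    - apply Rmult_lt_reg_r with (INR q); auto. unfold Rdiv.
      rewrite Rmult_assoc, (Rmult_assoc PI), Rinv_l by lra. nra. }
  unfold cot_ratio. rewrite Eth.
  rewrite (sum_lt_ext q _ (fun m => - 2 / INR q * cos th * (INR m * sin ((2 * INR m + 1) * th)))).
  2: { intros m _. rewrite mult_INR, plus_INR, mult_INR. simpl INR.
       replace (((1 + 1) * INR m + 1) * INR b * pi_over q) with ((2 * INR m + 1) * th) by (unfold th; ring).
       unfold Rdiv. ring. }
  rewrite sum_lt_scal.
  pose proof (sum_cos_even_multiples th q) as E1.
  pose proof (sum_weighted_sin_odd_multiples th q) as E2.
  replace ((2 * INR q - 1) * th) with (- th + 2 * INR b * PI) in E1 by (unfold th, pi_over; field; lra).
  replace (2 * INR q * th) with (0 + 2 * INR b * PI) in E2 by (unfold th, pi_over; field; lra).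
  rewrite sin_period, sin_neg in E1. rewrite cos_period, cos_0 in E2.
  assert (S0 : sum_lt q (fun m => cos (2 * INR m * th)) = 0).
  { apply Rmult_eq_reg_l with (2 * sin th); lra. }
  rewrite S0 in E2.
  assert (S1 : sum_lt q (fun m => INR m * sin ((2 * INR m + 1) * th)) = - INR q / (2 * sin th)).
  { apply Rmult_eq_reg_l with (2 * sin th); [rewrite E2; field |]; lra. }
  rewrite S1. field. lra.
Qed.

Lemma trig_space_stable_cot q b : (0 < b < q)%nat -> trig_space_stable q (cot_ratio q b).
Proof.
  intros Hb. rewrite cot_ratio_expansion by auto.
  apply trig_space_stable_sum_lt. intros m _. apply trig_space_stable_scal.
  - apply is_rat_div; [apply is_rat_mul; [apply (is_rat_IZR (-2)) |] |]; apply is_rat_INR.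
  - apply trig_space_stable_mul; [apply trig_space_stable_cos | apply trig_space_stable_sin]; lia.
Qed.

Inductive cot_span (q : nat) : R -> Prop :=
| cot_span_0 : cot_span q 0
| cot_span_cot b : (0 < b < q)%nat -> cot_span q (cot_ratio q b)
| cot_span_add x y : cot_span q x -> cot_span q y -> cot_span q (x + y)
| cot_span_scal r x : is_rat r -> cot_span q x -> cot_span q (r * x).

Lemma cot_span_stable q x : cot_span q x -> trig_space_stable q x.
Proof.
  induction 1.
  - apply trig_space_stable_0.
  - apply trig_space_stable_cot; auto.
  - apply trig_space_stable_add; auto.
  - apply trig_space_stable_scal; auto.
Qed.

Lemma in_trig_space_pow q x : (1 <= q)%nat -> trig_space_stable q x ->
  forall i, in_trig_space q (x ^ i).
Proof.
  intros Hq Hx i. induction i; simpl; auto.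
  replace 1 with (cos (INR 0 * pi_over q)) by (simpl; rewrite Rmult_0_l; apply cos_0).
  apply in_trig_space_cos; auto.
Qed.

Definition horner (l : list Z) (x : R) : R := fold_right (fun c acc => IZR c + x * acc) 0 l.

Lemma Cpoly_eval_real l x : Cpoly_eval l (x, 0) = (horner l x, 0).
Proof.
  induction l; cbn [Cpoly_eval fold_right horner]; auto.
  unfold Cpoly_eval in IHl. rewrite IHl. fold (horner l x).
  unfold Cadd, Cmul, RtoC. simpl. f_equal; ring.
Qed.

Lemma horner_map_seq zf k n x :
  horner (map zf (seq k n)) x = sum_lt n (fun t => IZR (zf (k + t)%nat) * x ^ t).
Proof.
  revert k. induction n; intros k; cbn [seq map horner fold_right]; auto.
  fold (horner (map zf (seq (S k) n)) x).
  rewrite IHn, sum_lt_succ_l, Nat.add_0_r. cbn [pow]. rewrite Rmult_1_r. f_equal.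
  rewrite <- sum_lt_scal. apply sum_lt_ext. intros t _.
  replace (S k + t)%nat with (k + S t)%nat by lia. cbn [pow]. ring.
Qed.

Lemma is_rat_common_denominator s (lam : nat -> R) : (forall a, is_rat (lam a)) ->
  exists (D : Z) (zf : nat -> Z), D <> 0%Z /\ forall a, In a s -> IZR D * lam a = IZR (zf a).
Proof.
  intros Hq. induction s as [| a s IH].
  - exists 1%Z, (fun _ => 0%Z). split; [lia | intros a []].
  - destruct IH as [D [zf [HD Hz]]]. destruct (Hq a) as [p [d [Hd Ha]]].
    exists (d * D)%Z, (fun b => if Nat.eq_dec b a then (p * D)%Z else (zf b * d)%Z).
    split; [lia |]. intros b Hb. destruct (Nat.eq_dec b a) as [-> | Hne].
    + apply not_0_IZR in Hd. rewrite Ha, !mult_IZR. field. auto.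
    + destruct Hb as [-> | Hb]; [congruence |]. rewrite !mult_IZR, <- Hz by auto. ring.
Qed.

Lemma is_rat_algebraic x : is_rat x -> algebraic (x, 0).
Proof.
  intros [z [d [Hd ->]]]. exists ((- z)%Z :: d :: nil). split.
  - apply Exists_cons_tl, Exists_cons_hd. auto.
  - rewrite Cpoly_eval_real. unfold C0. f_equal. simpl. rewrite opp_IZR.
    apply not_0_IZR in Hd. field. auto.
Qed.

(* The 4q + 1 powers 1, x, ..., x^(4q) lie in a rational space of dimension at most 4q. *)
Lemma trig_space_stable_algebraic q x : (1 <= q)%nat -> trig_space_stable q x -> algebraic (x, 0).
Proof.
  intros Hq Hx.
  destruct (choice _ (in_trig_space_pow q x Hq Hx)) as [CP HCP].
  set (s := seq 0 (S (4 * q))).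
  destruct (rational_dependence (4 * q) s CP) as [lam [Hl [[i0 [Hi0 Hnz]] Hrel]]].
  { apply seq_NoDup. } { intros; apply HCP. } { unfold s. rewrite length_seq. lia. }
  assert (Hroot : sum_list s (fun i => lam i * x ^ i) = 0).
  { rewrite (sum_list_ext s _ (fun i => sum_lt (4 * q) (fun k => trig_basis q k * (lam i * CP i k)))).
    2: { intros i _. rewrite (proj2 (HCP i)), <- sum_lt_scal. apply sum_lt_ext. intros; ring. }
    rewrite sum_list_sum_lt. apply sum_lt_eq0. intros k Hk.
    rewrite sum_list_scal, Hrel by auto. ring. }
  destruct (is_rat_common_denominator s lam Hl) as [D [zf [HD Hz]]].
  apply not_0_IZR in HD.
  exists (map zf s). split.
  - apply Exists_exists. exists (zf i0). split; [apply in_map; auto |].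
    intros E. specialize (Hz i0 Hi0). rewrite E in Hz. apply Rmult_integral in Hz. tauto.
  - rewrite Cpoly_eval_real. unfold C0. f_equal.
    unfold s in *. rewrite horner_map_seq. rewrite sum_list_seq in Hroot.
    rewrite <- (Rmult_0_r (IZR D)), <- Hroot, <- sum_lt_scal.
    apply sum_lt_ext. intros t Ht. rewrite <- Hz by (apply in_seq; lia). simpl. ring.
Qed.

Lemma cot_span_algebraic q x : (1 <= q)%nat -> cot_span q x -> algebraic (x, 0).
Proof. intros Hq Hx. apply trig_space_stable_algebraic with q; auto. apply cot_span_stable; auto. Qed.

(** * The series H_r and its duplication formula *)

Lemma Un_cv_const c : Un_cv (fun _ => c) c.
Proof. intros e He. exists O. intros. unfold Rdist. rewrite Rminus_diag, Rabs_R0. lra. Qed.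

Lemma Un_cv_scal c u l : Un_cv u l -> Un_cv (fun n => c * u n) (c * l).
Proof. intros H. apply CV_mult; auto. apply Un_cv_const. Qed.

Lemma Un_cv_double_index u l : Un_cv u l -> Un_cv (fun n => u (2 * n)%nat) l.
Proof. intros H e He. destruct (H e He) as [N HN]. exists N. intros n Hn. apply HN. lia. Qed.

Lemma Un_cv_inv_INR_plus c : 0 < c -> Un_cv (fun n => / (INR n + c)) 0.
Proof.
  intros Hc e He. destruct (archimed_cor1 e He) as [N [HN1 HN2]]. exists N.
  intros n Hn. unfold Rdist. rewrite Rminus_0_r.
  assert (INR N <= INR n) by (apply le_INR; lia).
  assert (0 < INR N) by (apply lt_0_INR; lia).
  rewrite Rabs_right.
  - apply Rle_lt_trans with (/ INR N); auto. apply Rinv_le_contravar; lra.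
  - left. apply Rinv_0_lt_compat. lra.
Qed.

Definition H_partial (r : R) (M : nat) : R :=
  sum_lt M (fun k => / (INR k + 1) - / (INR k + 1 + r)).

Lemma H_partial_cv r h : 0 <= r -> is_H r h -> Un_cv (H_partial r) h.
Proof.
  intros Hr [S [HS ->]]. apply CV_shift with 1%nat.
  apply Un_cv_ext with (fun N => r * sum_f_R0 (H_term r) N); [| apply Un_cv_scal; exact HS].
  intros N. rewrite Nat.add_1_r. unfold H_partial. induction N.
  - cbn [sum_f_R0 sum_lt]. unfold H_term. rewrite S_INR. simpl INR. field. lra.
  - cbn [sum_f_R0]. rewrite Rmult_plus_distr_l, IHN. cbn [sum_lt]. f_equal. unfold H_term.
    rewrite !S_INR. pose proof (pos_INR N). field. lra.
Qed.

Lemma H_partial_1 M : H_partial 1 M = 1 - / (INR M + 1).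
Proof.
  unfold H_partial. induction M; simpl sum_lt; [simpl; field |].
  rewrite IHM, S_INR. pose proof (pos_INR M). field. lra.
Qed.

Lemma H_partial_1_cv : Un_cv (H_partial 1) 1.
Proof.
  replace 1 with (1 - 0) at 2 by ring.
  apply Un_cv_ext with (fun M => 1 - / (INR M + 1)); [intros; rewrite H_partial_1; auto |].
  apply CV_minus; [apply Un_cv_const | apply Un_cv_inv_INR_plus; lra].
Qed.

Lemma is_H_1 h : is_H 1 h -> h = 1.
Proof. intros Hh. apply (UL_sequence (H_partial 1)); [apply H_partial_cv |]; auto using H_partial_1_cv; lra. Qed.

Definition harmonic (M : nat) : R := sum_lt M (fun k => / (INR k + 1)).

Lemma H_partial_dup x M : 0 < x ->
  H_partial (2 * x) (2 * M) - / 2 * H_partial x M - / 2 * H_partial (x + / 2) M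
  = harmonic (2 * M) - harmonic M + / 2 * / (INR M + x + / 2) - / (2 * x + 1).
Proof.
  intros Hx. induction M.
  - unfold H_partial, harmonic. simpl. field. lra.
  - replace (2 * S M)%nat with (S (S (2 * M))) by lia.
    unfold H_partial, harmonic in *. cbn [sum_lt]. rewrite !S_INR, !mult_INR. cbn [INR].
    pose proof (pos_INR M).
    match goal with |- ?L = ?R => assert (L - R = 0); [| lra] end.
    match type of IHM with ?L = ?R => assert (E : L - R = 0) by lra end.
    rewrite <- E. field. repeat split; lra.
Qed.

Lemma H_dup_limit x h1 h2 h3 : 0 < x ->
  Un_cv (H_partial (2 * x)) h1 -> Un_cv (H_partial x) h2 -> Un_cv (H_partial (x + / 2)) h3 ->
  Un_cv (fun M => harmonic (2 * M) - harmonic M) (h1 - / 2 * h2 - / 2 * h3 + / (2 * x + 1)).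
Proof.
  intros Hx H1 H2 H3.
  apply Un_cv_ext with (fun M =>
    H_partial (2 * x) (2 * M) - / 2 * H_partial x M - / 2 * H_partial (x + / 2) M
    - / 2 * / (INR M + (x + / 2)) + / (2 * x + 1)).
  { intros M. rewrite H_partial_dup by auto. rewrite Rplus_assoc. ring. }
  replace (h1 - / 2 * h2 - / 2 * h3 + / (2 * x + 1))
    with (h1 - / 2 * h2 - / 2 * h3 - / 2 * 0 + / (2 * x + 1)) by ring.
  apply CV_plus; [| apply Un_cv_const]. apply CV_minus.
  - apply CV_minus; [apply CV_minus |]; [apply Un_cv_double_index; auto | apply Un_cv_scal; auto ..].
  - apply Un_cv_scal. apply Un_cv_inv_INR_plus. lra.
Qed.

(* The instances x and 1/2 of [H_dup_limit] share the limit of harmonic (2M) - harmonic M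
   (which is log 2, but need not be computed). *)
Lemma H_dup x h2x hx hx' hhalf : 0 < x ->
  is_H (2 * x) h2x -> is_H x hx -> is_H (x + / 2) hx' -> is_H (/ 2) hhalf ->
  h2x = (hx + hx') / 2 + 1 - hhalf / 2 - / (2 * x + 1).
Proof.
  intros Hx H1 H2 H3 Hh.
  assert (Ex := H_dup_limit x _ _ _ Hx (H_partial_cv (2 * x) _ ltac:(lra) H1)
    (H_partial_cv x _ ltac:(lra) H2) (H_partial_cv (x + / 2) _ ltac:(lra) H3)).
  assert (Eh := H_dup_limit (/ 2) 1 hhalf 1 ltac:(lra)).
  replace (2 * / 2) with 1 in Eh by field. replace (/ 2 + / 2) with 1 in Eh by field.
  specialize (Eh H_partial_1_cv (H_partial_cv (/ 2) _ ltac:(lra) Hh) H_partial_1_cv).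
  pose proof (UL_sequence _ _ _ Ex Eh) as E.
  replace (/ (1 + 1)) with (/ 2) in E by (f_equal; ring). unfold Rdiv. lra.
Qed.

(** * The partial-fraction expansion of the cotangent and the reflection formula *)

Definition cot_tail (r : R) (M : nat) : R :=
  sum_lt M (fun k => / (INR k + 1 - r) - / (INR k + 1 + r)).

Definition cot_partial (r : R) (M : nat) : R := / r - cot_tail r M.

Lemma H_partial_reflect r M : 0 < r < 1 ->
  H_partial (1 - r) M - H_partial r M + / r - / (1 - r) = cot_partial r M - / (INR M + 1 - r).
Proof.
  intros Hr. unfold cot_partial, cot_tail, H_partial. induction M.
  - simpl. field. lra.
  - cbn [sum_lt]. rewrite S_INR. pose proof (pos_INR M).
    match goal with |- ?L = ?R => assert (L - R = 0); [| lra] end.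
    match type of IHM with ?L = ?R => assert (E : L - R = 0) by lra end.
    rewrite <- E. field. repeat split; lra.
Qed.

Lemma cot_partial_dup x M : 0 < x < / 2 ->
  cot_partial x M + cot_partial (x + / 2) M
  = 2 * cot_partial (2 * x) (2 * M) + 2 / (2 * INR M + 1 + 2 * x).
Proof.
  intros Hx. unfold cot_partial, cot_tail. induction M.
  - simpl. field. lra.
  - replace (2 * S M)%nat with (S (S (2 * M))) by lia.
    cbn [sum_lt]. rewrite !S_INR, !mult_INR. cbn [INR]. pose proof (pos_INR M).
    match goal with |- ?L = ?R => assert (L - R = 0); [| lra] end.
    match type of IHM with ?L = ?R => assert (E : L - R = 0) by lra end.
    rewrite <- E. field. repeat split; lra.
Qed.

Lemma cot_partial_reflect r M : 0 < r < 1 ->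
  cot_partial (1 - r) M = - cot_partial r M + / (INR M + 1 - r) + / (INR M + r).
Proof.
  intros Hr. unfold cot_partial, cot_tail. induction M.
  - simpl. field. lra.
  - cbn [sum_lt]. rewrite !S_INR. pose proof (pos_INR M).
    match goal with |- ?L = ?R => assert (L - R = 0); [| lra] end.
    match type of IHM with ?L = ?R => assert (E : L - R = 0) by lra end.
    rewrite <- E. field. repeat split; lra.
Qed.

Lemma cot_tail_term_nonneg r k : 0 < r < 1 -> / (INR k + 1 + r) <= / (INR k + 1 - r).
Proof. intros Hr. pose proof (pos_INR k). apply Rinv_le_contravar; lra. Qed.

Lemma cot_tail_nonneg r M : 0 < r < 1 -> 0 <= cot_tail r M.
Proof.
  intros Hr. unfold cot_tail. induction M; simpl; [lra |].
  pose proof (cot_tail_term_nonneg r M Hr). lra.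
Qed.

Lemma cot_tail_le r M : 0 < r < 1 ->
  cot_tail r (S M) <= / (1 - r) + 3 / 2 - / (INR M + 1) - / (INR M + 2).
Proof.
  intros Hr. unfold cot_tail. induction M.
  - simpl. replace (0 + 1 - r) with (1 - r) by ring.
    assert (0 < / (0 + 1 + r)) by (apply Rinv_0_lt_compat; lra).
    replace (/ (0 + 1)) with 1 by field. replace (/ (0 + 2)) with (/ 2) by (f_equal; ring). lra.
  - cbn [sum_lt] in *. rewrite S_INR. pose proof (pos_INR M).
    assert (A1 : / (INR M + 2 - r) <= / (INR M + 1)) by (apply Rinv_le_contravar; lra).
    assert (A2 : / (INR M + 3) <= / (INR M + 2 + r)) by (apply Rinv_le_contravar; lra).
    replace (INR M + 1 + 1) with (INR M + 2) in * by ring.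
    replace (INR M + 1 + 2) with (INR M + 3) by ring.
    lra.
Qed.

Lemma cot_tail_le_linear r M : 0 < r <= / 2 -> cot_tail r M <= 4 * r - 2 * r / (INR M + / 2).
Proof.
  intros Hr. unfold cot_tail. induction M.
  - simpl. replace (2 * r / (0 + / 2)) with (4 * r) by field. lra.
  - cbn [sum_lt]. rewrite S_INR. pose proof (pos_INR M).
    assert (/ (INR M + 1 - r) - / (INR M + 1 + r)
            <= 2 * r / (INR M + / 2) - 2 * r / (INR M + 1 + / 2)).
    { replace (/ (INR M + 1 - r) - / (INR M + 1 + r))
        with (2 * r / ((INR M + 1) * (INR M + 1) - r * r)) by (field; repeat split; nra).
      replace (2 * r / (INR M + / 2) - 2 * r / (INR M + 1 + / 2))
        with (2 * r / ((INR M + 1) * (INR M + 1) - / 4)) by (field; repeat split; nra).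
      unfold Rdiv. apply Rmult_le_compat_l; [lra |]. apply Rinv_le_contravar; nra. }
    lra.
Qed.

Lemma cot_partial_cv r : 0 < r < 1 -> exists l, Un_cv (cot_partial r) l.
Proof.
  intros Hr. destruct (decreasing_cv (cot_partial r)) as [l Hl].
  - intros M. unfold cot_partial, cot_tail. simpl. pose proof (cot_tail_term_nonneg r M Hr). lra.
  - exists (- (/ r - / (1 - r) - 3 / 2)). intros y [M ->]. unfold opp_seq, cot_partial.
    enough (cot_tail r M <= / (1 - r) + 3 / 2) by lra.
    destruct M; [unfold cot_tail; simpl; assert (0 < / (1 - r)) by (apply Rinv_0_lt_compat; lra); lra |].
    pose proof (cot_tail_le r M Hr). pose proof (pos_INR M).
    assert (0 < / (INR M + 1)) by (apply Rinv_0_lt_compat; lra).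
    assert (0 < / (INR M + 2)) by (apply Rinv_0_lt_compat; lra). lra.
  - exists l; auto.
Qed.

Definition cot_series (r : R) : R := epsilon (inhabits 0) (fun l => Un_cv (cot_partial r) l).

Lemma cot_series_cv r : 0 < r < 1 -> Un_cv (cot_partial r) (cot_series r).
Proof. intros Hr. unfold cot_series. apply epsilon_spec, cot_partial_cv; auto. Qed.

Lemma cot_series_bounds r : 0 < r <= / 2 -> / r - 4 * r <= cot_series r <= / r.
Proof.
  intros Hr. assert (Hr' : 0 < r < 1) by lra. pose proof (cot_series_cv r Hr') as Hcv. split.
  - apply (@Rle_cv_lim (fun _ => / r - 4 * r) (cot_partial r)); [intros M | apply Un_cv_const | exact Hcv]. unfold cot_partial. pose proof (cot_tail_le_linear r M Hr). pose proof (pos_INR M).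
    assert (0 <= 2 * r / (INR M + / 2)) by (apply Rmult_le_pos; [lra | left; apply Rinv_0_lt_compat; lra]).
    lra.
  - apply (@Rle_cv_lim (cot_partial r) (fun _ => / r)); [intros M | exact Hcv | apply Un_cv_const]. unfold cot_partial. pose proof (cot_tail_nonneg r M Hr'). lra.
Qed.

Lemma cot_series_reflect r : 0 < r < 1 -> cot_series (1 - r) = - cot_series r.
Proof.
  intros Hr. apply (UL_sequence (cot_partial (1 - r))); [apply cot_series_cv; lra |].
  replace (- cot_series r) with (-1 * cot_series r + 0 + 0) by ring.
  apply Un_cv_ext with (fun M => -1 * cot_partial r M + / (INR M + (1 - r)) + / (INR M + r)).
  - intros M. rewrite cot_partial_reflect by auto. replace (INR M + (1 - r)) with (INR M + 1 - r) by ring. ring.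
  - apply CV_plus; [apply CV_plus |]; [apply Un_cv_scal, cot_series_cv; auto | apply Un_cv_inv_INR_plus; lra ..].
Qed.

Lemma cot_series_dup x : 0 < x < / 2 -> cot_series x + cot_series (x + / 2) = 2 * cot_series (2 * x).
Proof.
  intros Hx. apply (UL_sequence (fun M => cot_partial x M + cot_partial (x + / 2) M)).
  - apply CV_plus; apply cot_series_cv; lra.
  - rewrite <- (Rplus_0_r (2 * cot_series (2 * x))).
    apply Un_cv_ext with (fun M => 2 * cot_partial (2 * x) (2 * M) + / (INR M + (/ 2 + x))).
    + intros M. rewrite cot_partial_dup by auto. pose proof (pos_INR M).
      replace (2 / (2 * INR M + 1 + 2 * x)) with (/ (INR M + (/ 2 + x))); [ring |]. field. lra.
    + apply CV_plus; [apply Un_cv_scal, Un_cv_double_index, cot_series_cv; lra | apply Un_cv_inv_INR_plus; lra].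
Qed.

Lemma sin_lb_poly a : sin_lb a = a - a ^ 3 / 6 + a ^ 5 / 120 - a ^ 7 / 5040.
Proof.
  unfold sin_lb, sin_approx, sin_term. cbn [sum_f_R0 Factorial.fact Nat.mul Nat.add].
  rewrite !INR_IZR_INZ. cbn [Z.of_nat Pos.of_succ_nat Pos.succ]. field.
Qed.

Lemma sin_ub_poly a : sin_ub a = a - a ^ 3 / 6 + a ^ 5 / 120 - a ^ 7 / 5040 + a ^ 9 / 362880.
Proof.
  unfold sin_ub, sin_approx, sin_term. cbn [sum_f_R0 Nat.mul Nat.add].
  repeat rewrite fact_simpl. rewrite ?mult_INR. cbn [Factorial.fact INR]. field.
Qed.

Lemma cos_lb_poly a : cos_lb a = 1 - a ^ 2 / 2 + a ^ 4 / 24 - a ^ 6 / 720.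
Proof.
  unfold cos_lb, cos_approx, cos_term. cbn [sum_f_R0 Factorial.fact Nat.mul Nat.add].
  rewrite !INR_IZR_INZ. cbn [Z.of_nat Pos.of_succ_nat Pos.succ]. field.
Qed.

Lemma cos_ub_poly a : cos_ub a = 1 - a ^ 2 / 2 + a ^ 4 / 24 - a ^ 6 / 720 + a ^ 8 / 40320.
Proof.
  unfold cos_ub, cos_approx, cos_term. cbn [sum_f_R0 Nat.mul Nat.add].
  repeat rewrite fact_simpl. rewrite ?mult_INR. cbn [Factorial.fact INR]. field.
Qed.

Lemma sin_cos_small_angle t : 0 < t <= PI / 2 ->
  t / 3 <= sin t /\ - (t ^ 3 / 3) <= t * cos t - sin t <= 0.
Proof.
  intros Ht. pose proof PI_4.
  destruct (SIN t) as [S1 S2]; try lra. destruct (COS t) as [C1 C2]; try lra.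
  rewrite sin_lb_poly in S1. rewrite sin_ub_poly in S2.
  rewrite cos_lb_poly in C1. rewrite cos_ub_poly in C2.
  assert (T2 : t ^ 2 <= 4) by nra. assert (T4 : t ^ 4 <= 16) by nra. assert (T6 : t ^ 6 <= 64) by nra.
  assert (P3 : 0 < t ^ 3) by (apply pow_lt; lra). assert (P5 : 0 < t ^ 5) by (apply pow_lt; lra).
  assert (P7 : 0 < t ^ 7) by (apply pow_lt; lra).
  split; [| split].
  - assert (t ^ 5 * t ^ 2 <= t ^ 5 * 4) by nra. assert (t * t ^ 2 <= t * 4) by nra.
    replace (t ^ 7) with (t ^ 5 * t ^ 2) in S1 by ring. replace (t ^ 3) with (t * t ^ 2) in S1 by ring.
    lra.
  - assert (A : t * (1 - t ^ 2 / 2 + t ^ 4 / 24 - t ^ 6 / 720)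
                - (t - t ^ 3 / 6 + t ^ 5 / 120 - t ^ 7 / 5040 + t ^ 9 / 362880) <= t * cos t - sin t) by nra.
    replace (t * (1 - t ^ 2 / 2 + t ^ 4 / 24 - t ^ 6 / 720)
             - (t - t ^ 3 / 6 + t ^ 5 / 120 - t ^ 7 / 5040 + t ^ 9 / 362880))
      with (- (t ^ 3 / 3) + t ^ 5 * (/ 30 - t ^ 2 * (/ 720 - / 5040) - t ^ 4 / 362880)) in A by field.
    assert (0 <= t ^ 5 * (/ 30 - t ^ 2 * (/ 720 - / 5040) - t ^ 4 / 362880)) by nra. lra.
  - assert (A : t * cos t - sin t <= t * (1 - t ^ 2 / 2 + t ^ 4 / 24 - t ^ 6 / 720 + t ^ 8 / 40320)
                - (t - t ^ 3 / 6 + t ^ 5 / 120 - t ^ 7 / 5040)) by nra.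
    replace (t * (1 - t ^ 2 / 2 + t ^ 4 / 24 - t ^ 6 / 720 + t ^ 8 / 40320)
             - (t - t ^ 3 / 6 + t ^ 5 / 120 - t ^ 7 / 5040))
      with (t ^ 3 * (- / 3 + t ^ 2 / 30 + t ^ 6 / 40320) - t ^ 7 * (/ 720 - / 5040)) in A by field.
    assert (t ^ 3 * (- / 3 + t ^ 2 / 30 + t ^ 6 / 40320) <= 0) by nra. nra.
Qed.

Lemma pi_cot_sub_inv_bound r : 0 < r <= / 2 ->
  - (16 * r) <= PI * (cos (PI * r) / sin (PI * r)) - / r <= 0.
Proof.
  intros Hr. pose proof PI_RGT_0. pose proof PI_4.
  set (t := PI * r).
  assert (Ht : 0 < t <= PI / 2) by (unfold t; split; nra).
  destruct (sin_cos_small_angle t Ht) as [Hs [N1 N2]].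
  set (s := sin t) in *. set (c := cos t) in *.
  replace (PI * (c / s) - / r) with (PI * ((t * c - s) / (t * s))) by (unfold t; field; split; lra).
  assert (X1 : (t * c - s) / (t * s) <= 0).
  { assert (0 < / (t * s)) by (apply Rinv_0_lt_compat; nra). unfold Rdiv. nra. }
  assert (X2 : - t <= (t * c - s) / (t * s)).
  { apply Rmult_le_reg_r with (t * s); [nra |]. unfold Rdiv.
    rewrite Rmult_assoc, Rinv_l by nra. nra. }
  assert (PI * PI <= 16) by nra.
  assert (PI * t <= 16 * r) by (unfold t; rewrite <- Rmult_assoc; nra).
  split; nra.
Qed.

(* The limit of [cot_partial] is identified with pi cot(pi r) without Fourier analysis: the
   difference is odd about 1/2, satisfies the duplication law and is O(r) at 0; halving a point
   where it nearly attains its supremum contradicts the O(r) bound. *)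
Definition cot_defect (r : R) : R := cot_series r - PI * (cos (PI * r) / sin (PI * r)).

Lemma cot_defect_small r : 0 < r <= / 2 -> - (20 * r) <= cot_defect r <= 20 * r.
Proof.
  intros Hr. pose proof (pi_cot_sub_inv_bound r Hr). pose proof (cot_series_bounds r Hr).
  unfold cot_defect. lra.
Qed.

Lemma cot_defect_reflect r : 0 < r < 1 -> cot_defect (1 - r) = - cot_defect r.
Proof.
  intros Hr. unfold cot_defect. rewrite cot_series_reflect by auto.
  replace (PI * (1 - r)) with (PI - PI * r) by ring.
  rewrite sin_PI_x, Rtrigo_facts.cos_pi_minus. unfold Rdiv. ring.
Qed.

Lemma cot_defect_dup x : 0 < x < / 2 -> cot_defect x + cot_defect (x + / 2) = 2 * cot_defect (2 * x).
Proof.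
  intros Hx. unfold cot_defect. pose proof (cot_series_dup x Hx). pose proof PI_RGT_0.
  set (t := PI * x).
  assert (Ht : 0 < t < PI / 2) by (unfold t; split; nra).
  replace (PI * (x + / 2)) with (t + PI / 2) by (unfold t; field).
  replace (PI * (2 * x)) with (2 * t) by (unfold t; ring).
  rewrite cos_plus, sin_plus, cos_PI2, sin_PI2, cos_2a, sin_2a.
  assert (0 < sin t) by (apply sin_gt_0; lra). assert (0 < cos t) by (apply cos_gt_0; lra).
  assert (E : cos t / sin t + (cos t * 0 - sin t * 1) / (sin t * 0 + cos t * 1)
              = 2 * ((cos t * cos t - sin t * sin t) / (2 * sin t * cos t))) by (field; lra).
  assert (PI * (cos t / sin t) + PI * ((cos t * 0 - sin t * 1) / (sin t * 0 + cos t * 1))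
          = 2 * (PI * ((cos t * cos t - sin t * sin t) / (2 * sin t * cos t))))
    by (rewrite <- Rmult_plus_distr_l, E; ring).
  lra.
Qed.

Lemma cot_defect_bounded r : 0 < r < 1 -> cot_defect r <= 10.
Proof.
  intros Hr. destruct (Rle_or_lt r (/ 2)).
  - pose proof (cot_defect_small r (conj (proj1 Hr) H)). lra.
  - pose proof (cot_defect_small (1 - r) ltac:(lra)).
    pose proof (cot_defect_reflect (1 - r) ltac:(lra)) as E.
    replace (1 - (1 - r)) with r in E by ring. lra.
Qed.

Lemma cot_defect_halve S y e : (forall r, 0 < r < 1 -> cot_defect r <= S) ->
  0 < y < 1 -> S - e <= cot_defect y -> S - 2 * e <= cot_defect (y / 2).
Proof.
  intros HS Hy Hle. pose proof (cot_defect_dup (y / 2) ltac:(lra)) as D.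
  replace (2 * (y / 2)) with y in D by field.
  pose proof (HS (y / 2 + / 2) ltac:(lra)). lra.
Qed.

Lemma INR_le_pow2 n : INR n <= 2 ^ n.
Proof.
  induction n; [simpl; lra |]. rewrite S_INR. cbn [pow].
  assert (1 <= 2 ^ n) by (apply pow_R1_Rle; lra). lra.
Qed.

Lemma cot_defect_nonpos r : 0 < r < 1 -> cot_defect r <= 0.
Proof.
  intros Hr.
  set (E := fun y => exists r, 0 < r < 1 /\ y = cot_defect r).
  destruct (completeness E) as [S [HSub HSl]].
  { exists 10. intros y [r' [Hr' ->]]. apply cot_defect_bounded; auto. }
  { exists (cot_defect (/ 2)), (/ 2). split; [lra | auto]. }
  assert (HS : forall r, 0 < r < 1 -> cot_defect r <= S) by (intros r' Hr'; apply HSub; exists r'; auto).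
  destruct (Rle_or_lt S 0) as [HS0 | HS0]; [pose proof (HS r Hr); lra |]. exfalso.
  destruct (archimed_cor1 (S / 40)) as [N [HN1 HN2]]; [lra |].
  set (d := S / 2 ^ Datatypes.S N).
  assert (Hd : 0 < d) by (unfold d; apply Rdiv_lt_0_compat; auto; apply pow_lt; lra).
  destruct (classic (exists r0, 0 < r0 < 1 /\ S - d < cot_defect r0)) as [[r0 [Hr0 Hf0]] | Hno].
  2: { assert (is_upper_bound E (S - d)).
       { intros y [r' [Hr' ->]]. apply Rnot_lt_le. intros Hc. apply Hno. exists r'. auto. }
       specialize (HSl _ H). lra. }
  assert (Hiter : forall j, 0 < r0 / 2 ^ j < 1 /\ S - 2 ^ j * d <= cot_defect (r0 / 2 ^ j)).
  { induction j as [| j [Hy Hle]].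
    - simpl. replace (r0 / 1) with r0 by field. lra.
    - assert (0 < 2 ^ j) by (apply pow_lt; lra).
      replace (r0 / 2 ^ Datatypes.S j) with (r0 / 2 ^ j / 2) by (simpl; field; lra).
      split; [lra |]. simpl. rewrite Rmult_assoc. apply cot_defect_halve; auto. }
  destruct (Hiter N) as [Hz Hle].
  replace (2 ^ N * d) with (S / 2) in Hle by (unfold d; simpl; field; apply pow_nonzero; lra).
  assert (0 < INR N) by (apply lt_0_INR; lia). pose proof (INR_le_pow2 N).
  assert (Hsmall : r0 / 2 ^ N < / INR N).
  { unfold Rdiv. apply Rlt_le_trans with (1 * / 2 ^ N).
    - apply Rmult_lt_compat_r; [apply Rinv_0_lt_compat, pow_lt |]; lra.
    - rewrite Rmult_1_l. apply Rinv_le_contravar; lra. }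
  assert (Hhalf : r0 / 2 ^ N <= / 2).
  { assert (2 <= 2 ^ N) by (destruct N; [lia |]; cbn [pow]; pose proof (pow_R1_Rle 2 N); lra).
    apply Rmult_le_reg_r with (2 ^ N); [lra |]. unfold Rdiv.
    rewrite Rmult_assoc, Rinv_l by lra. nra. }
  pose proof (cot_defect_small (r0 / 2 ^ N) ltac:(lra)). lra.
Qed.

Lemma cot_series_eq r : 0 < r < 1 -> cot_series r = PI * (cos (PI * r) / sin (PI * r)).
Proof.
  intros Hr. pose proof (cot_defect_nonpos r Hr).
  pose proof (cot_defect_nonpos (1 - r) ltac:(lra)). rewrite cot_defect_reflect in * by auto.
  unfold cot_defect in *. lra.
Qed.

Lemma H_reflect r h h' : 0 < r < 1 -> is_H r h -> is_H (1 - r) h' ->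
  h' = h - / r + / (1 - r) + PI * (cos (PI * r) / sin (PI * r)).
Proof.
  intros Hr H1 H2. rewrite <- cot_series_eq by auto.
  enough (h' - h + / r - / (1 - r) + 0 = cot_series r) by lra.
  apply (UL_sequence (cot_partial r)); [| apply cot_series_cv; auto].
  apply Un_cv_ext with (fun M => (H_partial (1 - r) M - H_partial r M + / r - / (1 - r)) + / (INR M + (1 - r))).
  - intros M. rewrite H_partial_reflect by auto. replace (INR M + (1 - r)) with (INR M + 1 - r) by ring. ring.
  - apply CV_plus; [| apply Un_cv_inv_INR_plus; lra].
    apply CV_minus; [apply CV_plus | apply Un_cv_const]; [apply CV_minus | apply Un_cv_const];
      apply H_partial_cv; auto; lra.
Qed.

Definition H_table (q : nat) (Hv : nat -> R) : Prop :=
  forall a, (1 <= a <= q)%nat -> is_H (INR a / INR q) (Hv a).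

Lemma H_table_top q Hv : (1 <= q)%nat -> H_table q Hv -> Hv q = 1.
Proof.
  intros Hq Htab. apply is_H_1. replace 1 with (INR q / INR q); [apply Htab; lia |].
  field. apply not_0_INR. lia.
Qed.

Lemma H_table_dup q h Hv a : q = (2 * h)%nat -> (1 <= a <= h)%nat -> H_table q Hv ->
  Hv (2 * a)%nat = (Hv a + Hv (a + h)%nat) / 2 + 1 - Hv h / 2 - INR q / INR (2 * a + q).
Proof.
  intros -> Ha Htab.
  assert (Hh : 0 < INR h) by (apply lt_0_INR; lia).
  assert (Ha0 : 0 < INR a) by (apply lt_0_INR; lia).
  set (x := INR a / INR (2 * h)).
  assert (E1 : 2 * x = INR (2 * a) / INR (2 * h)) by (unfold x; rewrite !mult_INR; simpl; field; lra).
  assert (E2 : x + / 2 = INR (a + h) / INR (2 * h)) by (unfold x; rewrite plus_INR, !mult_INR; simpl; field; lra).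
  assert (E3 : / 2 = INR h / INR (2 * h)) by (rewrite mult_INR; simpl; field; lra).
  rewrite (H_dup x (Hv (2 * a)%nat) (Hv a) (Hv (a + h)%nat) (Hv h)).
  - f_equal. unfold x. rewrite plus_INR, !mult_INR. simpl. field. lra.
  - unfold x. apply Rdiv_lt_0_compat; [lra | rewrite mult_INR; simpl; lra].
  - rewrite E1. apply Htab. lia.
  - apply Htab. lia.
  - rewrite E2. apply Htab. lia.
  - rewrite E3. apply Htab. lia.
Qed.

Lemma H_table_refl q Hv a : (1 <= a < q)%nat -> H_table q Hv ->
  Hv (q - a)%nat = Hv a - INR q / INR a + INR q / INR (q - a) + PI * cot_ratio q a.
Proof.
  intros Ha Htab.
  assert (Hq : 0 < INR q) by (apply lt_0_INR; lia).
  assert (Haq : INR a < INR q) by (apply lt_INR; lia).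
  assert (Ha0 : 0 < INR a) by (apply lt_0_INR; lia).
  set (r := INR a / INR q).
  assert (Hr : 0 < r < 1).
  { unfold r. split; [apply Rdiv_lt_0_compat; auto |].
    apply Rmult_lt_reg_r with (INR q); auto. unfold Rdiv. rewrite Rmult_assoc, Rinv_l; lra. }
  rewrite (H_reflect r (Hv a) (Hv (q - a)%nat) Hr).
  - unfold cot_ratio. replace (PI * INR a / INR q) with (PI * r) by (unfold r; field; lra).
    replace (/ r) with (INR q / INR a) by (unfold r; field; lra).
    replace (/ (1 - r)) with (INR q / INR (q - a)); [ring |].
    unfold r. rewrite minus_INR by lia. field. lra.
  - apply Htab. lia.
  - replace (1 - r) with (INR (q - a) / INR q) by (unfold r; rewrite minus_INR by lia; field; lra).
    apply Htab. lia.
Qed.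

(** * Dimension of a rational span *)

Lemma Clincomb_real s (r : nat -> R) x :
  Clincomb s (fun a => (r a, 0)) x = (sum_list s (fun a => r a * x a), 0).
Proof.
  induction s; cbn [Clincomb fold_right sum_list]; auto.
  unfold Clincomb in IHs. rewrite IHs. unfold Cadd, Cmul, RtoC. simpl. f_equal; ring.
Qed.

Section RationalSpan.

Variable A : R -> Prop.
Hypothesis A_0 : A 0.
Hypothesis A_add : forall x y, A x -> A y -> A (x + y).
Hypothesis A_scal : forall r x, is_rat r -> A x -> A (r * x).
Variable t : R.
Variable m : nat.
Variable g : nat -> R.

Definition in_rat_span (y : R) : Prop :=
  exists c : nat -> R, (forall j, is_rat (c j)) /\
    exists b, A b /\ y = sum_lt m (fun j => c j * g j) + b * t.

Lemma in_rat_span_add x y : in_rat_span x -> in_rat_span y -> in_rat_span (x + y).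
Proof.
  intros [c [Hc [b [Hb ->]]]] [d [Hd [e [He ->]]]].
  exists (fun j => c j + d j). split; [intros; apply is_rat_add; auto |].
  exists (b + e). split; auto.
  rewrite (sum_lt_ext _ (fun j => (c j + d j) * g j) (fun j => c j * g j + d j * g j)) by (intros; ring).
  rewrite sum_lt_add. ring.
Qed.

Lemma in_rat_span_scal r x : is_rat r -> in_rat_span x -> in_rat_span (r * x).
Proof.
  intros Hr [c [Hc [b [Hb ->]]]].
  exists (fun j => r * c j). split; [intros; apply is_rat_mul; auto |].
  exists (r * b). split; auto.
  rewrite (sum_lt_ext _ (fun j => r * c j * g j) (fun j => r * (c j * g j))) by (intros; ring).
  rewrite sum_lt_scal. ring.
Qed.

Lemma in_rat_span_gen j : (j < m)%nat -> in_rat_span (g j).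
Proof.
  intros Hj. exists (fun i => if Nat.eq_dec i j then 1 else 0). split.
  - intros i. destruct (Nat.eq_dec i j); [apply is_rat_1 | apply is_rat_0].
  - exists 0. split; auto. rewrite sum_lt_delta; auto. ring.
Qed.

Lemma in_rat_span_mul_t b : A b -> in_rat_span (b * t).
Proof.
  intros Hb. exists (fun _ => 0). split; [intros; apply is_rat_0 |].
  exists b. split; auto. rewrite sum_lt_eq0 by (intros; ring). ring.
Qed.

Lemma rat_relation_span (s : list nat) (y : nat -> R) (C : nat -> nat -> R) (B lam : nat -> R) :
  (forall a, In a s -> y a = sum_lt m (fun j => C a j * g j) + B a * t) ->
  (forall j, (j < m)%nat -> sum_list s (fun a => lam a * C a j) = 0) ->
  sum_list s (fun a => lam a * y a) = sum_list s (fun a => lam a * B a) * t.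
Proof.
  intros Hy Hlam.
  rewrite (sum_list_ext s _ (fun a => sum_lt m (fun j => g j * (lam a * C a j)) + t * (lam a * B a))).
  2: { intros a Ha. rewrite Hy, Rmult_plus_distr_l, <- sum_lt_scal by auto.
       f_equal; [apply sum_lt_ext; intros | ]; ring. }
  rewrite sum_list_add, sum_list_sum_lt, sum_list_scal, sum_lt_eq0; [ring |].
  intros j Hj. rewrite sum_list_scal, Hlam by auto. ring.
Qed.

Lemma two_rational_relations (s : list nat) (C : nat -> nat -> R) :
  NoDup s -> (forall a j, is_rat (C a j)) -> (S m < length s)%nat ->
  exists lam mu a1 a2, (forall a, is_rat (lam a) /\ is_rat (mu a)) /\
    In a1 s /\ In a2 s /\ lam a1 <> 0 /\ mu a1 = 0 /\ mu a2 <> 0 /\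
    forall j, (j < m)%nat ->
      sum_list s (fun a => lam a * C a j) = 0 /\ sum_list s (fun a => mu a * C a j) = 0.
Proof.
  intros Hnd HC Hlen.
  destruct (rational_dependence m s C Hnd HC ltac:(lia)) as [lam [Hlq [[a1 [Ha1 Hl1]] Hls]]].
  destruct (NoDup_split_at s a1 Hnd Ha1) as [s' [Hnd' [Hlen' [Hin' Hsum]]]].
  destruct (rational_dependence m s' C Hnd' HC ltac:(lia)) as [mu0 [Hmq [[a2 [Ha2 Hm2]] Hms]]].
  destruct (Hin' a2 Ha2) as [Ha2s Ha21].
  set (mu := fun a => if Nat.eq_dec a a1 then 0 else mu0 a).
  exists lam, mu, a1, a2. repeat split; auto.
  - unfold mu. destruct (Nat.eq_dec a a1); [apply is_rat_0 | auto].
  - unfold mu. destruct (Nat.eq_dec a1 a1); congruence.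
  - unfold mu. destruct (Nat.eq_dec a2 a1); congruence.
  - rewrite Hsum. unfold mu at 1. destruct (Nat.eq_dec a1 a1); [| congruence].
    rewrite Rmult_0_l, Rplus_0_l, <- (Hms j) by auto. apply sum_list_ext.
    intros a Ha. destruct (Hin' a Ha) as [_ Hne]. unfold mu. destruct (Nat.eq_dec a a1); congruence.
Qed.

Lemma in_rat_span_coefficients (s : list nat) (y : nat -> R) :
  (forall a, In a s -> in_rat_span (y a)) ->
  exists (C : nat -> nat -> R) (B : nat -> R), (forall a j, is_rat (C a j)) /\
    forall a, In a s -> A (B a) /\ y a = sum_lt m (fun j => C a j * g j) + B a * t.
Proof.
  intros Hy.
  assert (Hch : forall a, exists p : (nat -> R) * R, (forall j, is_rat (fst p j)) /\
            (In a s -> A (snd p) /\ y a = sum_lt m (fun j => fst p j * g j) + snd p * t)).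
  { intros a. destruct (classic (In a s)) as [Ha | Ha].
    - destruct (Hy a Ha) as [c [Hc [b [Hb Eb]]]]. exists (c, b). auto.
    - exists (fun _ => 0, 0). split; [intros; apply is_rat_0 | tauto]. }
  destruct (choice _ Hch) as [P HP].
  exists (fun a => fst (P a)), (fun a => snd (P a)). split; intros; apply HP; auto.
Qed.

Lemma rat_combination_in_A (s : list nat) (w B : nat -> R) :
  (forall a, is_rat (w a)) -> (forall a, In a s -> A (B a)) -> A (sum_list s (fun a => w a * B a)).
Proof.
  intros Hw HB. induction s as [| a s IH]; simpl; auto.
  apply A_add; [apply A_scal; auto; apply HB; simpl; auto |].
  apply IH. intros b Hb. apply HB. simpl. auto.
Qed.

Hypothesis A_algebraic : forall x, A x -> algebraic (x, 0).

(* Two independent rational relations kill the span of g; the combination V lam - U mu with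
   U, V their (algebraic) coefficients of t kills t as well. *)
Theorem rat_span_dependence (s : list nat) (y : nat -> R) :
  NoDup s -> (forall a, In a s -> in_rat_span (y a)) -> (S m < length s)%nat ->
  exists c : nat -> Cx, (forall a, In a s -> algebraic (c a)) /\
    (exists a, In a s /\ c a <> C0) /\ Clincomb s c y = C0.
Proof.
  intros Hnd Hy Hlen.
  destruct (in_rat_span_coefficients s y Hy) as [C [B [HC HyCB]]].
  destruct (two_rational_relations s C Hnd HC Hlen)
    as [lam [mu [a1 [a2 [Hq [Ha1 [Ha2 [Hl1 [Hm1 [Hm2 Hrel]]]]]]]]]].
  assert (HyC : forall a, In a s -> y a = sum_lt m (fun j => C a j * g j) + B a * t) by apply HyCB.
  pose proof (rat_relation_span s y C B lam HyC (fun j Hj => proj1 (Hrel j Hj))) as SL.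
  pose proof (rat_relation_span s y C B mu HyC (fun j Hj => proj2 (Hrel j Hj))) as SM.
  set (U := sum_list s (fun a => lam a * B a)) in *.
  set (V := sum_list s (fun a => mu a * B a)) in *.
  assert (HU : A U) by (apply rat_combination_in_A; [apply Hq | apply HyCB]).
  assert (HV : A V) by (apply rat_combination_in_A; [apply Hq | apply HyCB]).
  destruct (classic (U = 0 /\ V = 0)) as [[U0 V0] | NUV].
  - exists (fun a => (lam a, 0)). split; [| split].
    + intros a _. apply is_rat_algebraic, Hq.
    + exists a1. split; auto. intros E. inversion E. auto.
    + rewrite Clincomb_real, SL, U0. unfold C0. f_equal. ring.
  - exists (fun a => (V * lam a - U * mu a, 0)). split; [| split].
    + intros a _. apply A_algebraic.
      replace (V * lam a - U * mu a) with (lam a * V + - mu a * U) by ring.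
      apply A_add; apply A_scal; auto; [| apply is_rat_opp]; apply Hq.
    + destruct (Req_dec V 0) as [V0 | V0].
      * exists a2. split; auto. intros E. inversion E as [E1].
        rewrite V0 in E1. assert (U * mu a2 = 0) by lra.
        apply Rmult_integral in H. tauto.
      * exists a1. split; auto. intros E. inversion E as [E1].
        rewrite Hm1 in E1. assert (V * lam a1 = 0) by lra.
        apply Rmult_integral in H. tauto.
    + rewrite Clincomb_real. unfold C0. f_equal.
      rewrite (sum_list_ext s _ (fun a => V * (lam a * y a) + - U * (mu a * y a))) by (intros; ring).
      rewrite sum_list_add, !sum_list_scal, SL, SM. ring.
Qed.

End RationalSpan.

(** * The values H_(a/4f) for f a power of 2 *)

Definition H_generator (f : nat) (Hv : nat -> R) (j : nat) : R :=
  match j with O => 1 | 1 => Hv (2 * f)%nat | S e => Hv e end.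

Section HSpan.

Variable f : nat.
Variable Hv : nat -> R.
Hypothesis f_pos : (1 <= f)%nat.
Hypothesis Htable : H_table (4 * f) Hv.

Let in_H_span := in_rat_span (cot_span (4 * f)) PI (S f) (H_generator f Hv).

Let span_add := in_rat_span_add _ (cot_span_add (4 * f)) PI (S f) (H_generator f Hv).
Let span_scal := in_rat_span_scal _ (cot_span_scal (4 * f)) PI (S f) (H_generator f Hv).

Lemma span_rat r : is_rat r -> in_H_span r.
Proof.
  intros Hr. rewrite <- (Rmult_1_r r). apply span_scal; auto.
  apply (in_rat_span_gen _ (cot_span_0 (4 * f)) PI (S f) (H_generator f Hv) 0). lia.
Qed.

Lemma span_H_half : in_H_span (Hv (2 * f)%nat).
Proof. apply (in_rat_span_gen _ (cot_span_0 (4 * f)) PI (S f) (H_generator f Hv) 1). lia. Qed.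

Lemma span_H_small e : (1 <= e < f)%nat -> in_H_span (Hv e).
Proof.
  intros He. destruct e as [| e]; [lia |].
  apply (in_rat_span_gen _ (cot_span_0 (4 * f)) PI (S f) (H_generator f Hv) (S (S e))). lia.
Qed.

Lemma span_pi_cot a : (1 <= a < 4 * f)%nat -> in_H_span (PI * cot_ratio (4 * f) a).
Proof.
  intros Ha. rewrite Rmult_comm. apply in_rat_span_mul_t, cot_span_cot. lia.
Qed.

Lemma span_H_refl c : (1 <= c < 4 * f)%nat -> in_H_span (Hv c) -> in_H_span (Hv (4 * f - c)%nat).
Proof.
  intros Hc Hs. rewrite H_table_refl by auto. unfold Rminus.
  repeat apply span_add;
    [exact Hs | apply span_rat, is_rat_opp, is_rat_ratio | apply span_rat, is_rat_ratio | apply span_pi_cot; lia].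
Qed.

Lemma span_H_dup a : (1 <= a < f)%nat -> in_H_span (Hv (2 * a)%nat) -> in_H_span (Hv (a + 2 * f)%nat).
Proof.
  intros Ha Hs.
  assert (D := H_table_dup (4 * f) (2 * f) Hv a ltac:(lia) ltac:(lia) Htable).
  replace (Hv (a + 2 * f)%nat)
    with (2 * Hv (2 * a)%nat + - 1 * Hv a + Hv (2 * f)%nat + (- 2 + 2 * (INR (4 * f) / INR (2 * a + 4 * f))))
    by lra.
  apply span_add; [apply span_add; [apply span_add |] |].
  - apply span_scal; auto. apply (is_rat_IZR 2).
  - apply span_scal; [apply is_rat_opp, is_rat_1 | apply span_H_small; lia].
  - apply span_H_half.
  - apply span_rat, is_rat_add; [apply (is_rat_IZR (-2)) | apply is_rat_mul; [apply (is_rat_IZR 2) | apply is_rat_ratio]].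
Qed.

Lemma span_H_multiple_f a : (1 <= a <= 4 * f)%nat -> Nat.divide f a -> in_H_span (Hv a).
Proof.
  intros Ha [n ->].
  assert (Htop : Hv (4 * f)%nat = 1) by (apply H_table_top; auto; lia).
  assert (D := H_table_dup (4 * f) (2 * f) Hv f ltac:(lia) ltac:(lia) Htable).
  assert (R := H_table_refl (4 * f) Hv f ltac:(lia) Htable).
  replace (4 * f - f)%nat with (3 * f)%nat in R by lia.
  replace (f + 2 * f)%nat with (3 * f)%nat in D by lia.
  assert (H1 : in_H_span (Hv f)).
  { set (c := PI * cot_ratio (4 * f) f) in *.
    set (k := INR (4 * f) / INR (2 * f + 4 * f) + / 2 * (INR (4 * f) / INR f)
              - / 2 * (INR (4 * f) / INR (3 * f)) - 1).
    assert (Hk : is_rat k).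
    { unfold k. apply is_rat_sub; [| apply is_rat_1].
      apply is_rat_sub; [apply is_rat_add |]; auto using is_rat_mul, is_rat_half, is_rat_ratio. }
    replace (Hv f) with (3 / 2 * Hv (2 * f)%nat + - / 2 * c + k) by (unfold k; lra).
    apply span_add; [apply span_add |].
    - apply span_scal; [apply is_rat_div; apply is_rat_IZR | apply span_H_half].
    - apply span_scal; [apply is_rat_opp, is_rat_half | apply span_pi_cot; lia].
    - apply span_rat, Hk. }
  assert (Hn : (n = 1 \/ n = 2 \/ n = 3 \/ n = 4)%nat) by nia.
  destruct Hn as [-> | [-> | [-> | ->]]].
  - replace (1 * f)%nat with f by lia. auto.
  - apply span_H_half.
  - rewrite R. unfold Rminus. repeat apply span_add;
      [exact H1 | apply span_rat, is_rat_opp, is_rat_ratio | apply span_rat, is_rat_ratio | apply span_pi_cot; lia].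
  - rewrite Htop. apply span_rat, is_rat_1.
Qed.

(* An odd multiple of p in (f, 4f) is reached from generators and multiples of 2p by at most
   one duplication followed by one reflection. *)
Lemma span_H_multiple_step p : Nat.divide (2 * p) f ->
  (forall a, (1 <= a <= 4 * f)%nat -> Nat.divide (2 * p) a -> in_H_span (Hv a)) ->
  forall a, (1 <= a <= 4 * f)%nat -> Nat.divide p a -> in_H_span (Hv a).
Proof.
  intros [w Hw] IH a Ha [k ->].
  destruct (Nat.Even_or_Odd k) as [[u ->] | [u ->]].
  { apply IH; auto. exists u. lia. }
  assert (Hp : (1 <= p)%nat) by nia.
  assert (Hc : (2 * u + 1 < 2 * w \/ 2 * w < 2 * u + 1 < 4 * w \/
                4 * w < 2 * u + 1 < 6 * w \/ 6 * w < 2 * u + 1 <= 8 * w)%nat) by nia.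
  destruct Hc as [Hc | [Hc | [Hc | Hc]]].
  - apply span_H_small. nia.
  - replace ((2 * u + 1) * p)%nat with (4 * f - (2 * f - (2 * u + 1) * p + 2 * f))%nat by nia.
    apply span_H_refl; [nia |]. apply span_H_dup; [nia |].
    apply IH; [nia |]. exists (4 * w - (2 * u + 1))%nat. nia.
  - replace ((2 * u + 1) * p)%nat with ((2 * u + 1) * p - 2 * f + 2 * f)%nat by nia.
    apply span_H_dup; [nia |].
    apply IH; [nia |]. exists (2 * u + 1 - 4 * w)%nat. nia.
  - replace ((2 * u + 1) * p)%nat with (4 * f - (4 * f - (2 * u + 1) * p))%nat by nia.
    apply span_H_refl; [nia |]. apply span_H_small. nia.
Qed.

Lemma span_H_all m : f = (2 ^ m)%nat -> forall a, (1 <= a <= 4 * f)%nat -> in_H_span (Hv a).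
Proof.
  intros Hfm.
  assert (Hk : forall k, (k <= m)%nat ->
            forall a, (1 <= a <= 4 * f)%nat -> Nat.divide (2 ^ (m - k)) a -> in_H_span (Hv a)).
  { induction k as [| k IHk]; intros Hk.
    - rewrite Nat.sub_0_r, <- Hfm. apply span_H_multiple_f.
    - apply span_H_multiple_step.
      + rewrite Hfm, <- Nat.pow_succ_r'. exists (2 ^ k)%nat.
        rewrite <- Nat.pow_add_r. f_equal. lia.
      + rewrite <- Nat.pow_succ_r'. replace (S (m - S k)) with (m - k)%nat by lia. apply IHk. lia. }
  intros a Ha. apply (Hk m); auto. rewrite Nat.sub_diag. apply Nat.divide_1_l.
Qed.

End HSpan.

Lemma gcd_odd_pow2 k x : Nat.Odd x -> Nat.gcd x (2 ^ k) = 1%nat.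
Proof.
  intros Hx. induction k; [apply Nat.divide_1_r, Nat.gcd_divide_r |].
  set (d := Nat.gcd x (2 ^ S k)).
  assert (Hdx : Nat.divide d x) by apply Nat.gcd_divide_l.
  assert (Hd2 : Nat.divide d (2 * 2 ^ k)) by apply Nat.gcd_divide_r.
  assert (Hg : Nat.gcd d 2 = 1%nat).
  { assert (G2 : Nat.divide (Nat.gcd d 2) 2) by apply Nat.gcd_divide_r.
    assert (Gd : Nat.divide (Nat.gcd d 2) d) by apply Nat.gcd_divide_l.
    apply Nat.divide_pos_le in G2; [| lia].
    destruct (Nat.gcd d 2) as [| [| [| g]]] eqn:E; try lia.
    - apply Nat.gcd_eq_0 in E. lia.
    - exfalso. assert (Nat.divide 2 x) as [z Hz] by (eapply Nat.divide_trans; eauto).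
      destruct Hx as [y Hy]. lia. }
  assert (Nat.divide d (Nat.gcd x (2 ^ k))) by (apply Nat.gcd_greatest; auto; apply (Nat.gauss d 2); auto).
  rewrite IHk in H. apply Nat.divide_1_r in H. auto.
Qed.

Lemma gcd_even_pow2 k x : (1 <= k)%nat -> Nat.Even x -> Nat.gcd x (2 ^ k) <> 1%nat.
Proof.
  intros Hk [y Hy] E.
  assert (H2 : Nat.divide 2 (Nat.gcd x (2 ^ k))).
  { apply Nat.gcd_greatest; [exists y; lia |].
    exists (2 ^ (k - 1))%nat. rewrite Nat.mul_comm, <- Nat.pow_succ_r'. f_equal. lia. }
  rewrite E in H2. apply Nat.divide_1_r in H2. lia.
Qed.

Lemma count_odd_seq M : length (filter Nat.odd (seq 1 (2 * M))) = M.
Proof.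
  induction M; auto.
  replace (2 * S M)%nat with (2 * M + 2)%nat by lia.
  rewrite seq_app, filter_app, length_app, IHM. cbn [seq filter].
  replace (1 + 2 * M)%nat with (S (2 * M)) by lia.
  rewrite Nat.odd_succ, Nat.even_even, Nat.odd_succ_succ, <- Nat.negb_even, Nat.even_even.
  simpl. lia.
Qed.

Lemma totient_pow2 k : (1 <= k)%nat -> totient (2 ^ k) = (2 ^ (k - 1))%nat.
Proof.
  intros Hk. unfold totient.
  rewrite (filter_ext_in _ Nat.odd).
  - replace (2 ^ k)%nat with (2 * 2 ^ (k - 1))%nat by (rewrite <- Nat.pow_succ_r'; f_equal; lia).
    apply count_odd_seq.
  - intros x _. destruct (Nat.Even_or_Odd x) as [He | Ho].
    + replace (Nat.odd x) with false by (rewrite <- Nat.negb_even; apply Nat.even_spec in He; rewrite He; auto).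
      apply Nat.eqb_neq, gcd_even_pow2; auto.
    + rewrite gcd_odd_pow2 by auto. apply Nat.odd_spec in Ho. rewrite Ho. auto.
Qed.

Theorem theorem3p5 (n : nat) (hn : (2 <= n)%nat) (Hv : nat -> R)
  (hH : forall a : nat, (1 <= a <= 2 ^ n)%nat ->
        is_H (INR a / INR (2 ^ n)) (Hv a)) :
  forall s : list nat,
    NoDup s ->
    (forall a, In a s -> (1 <= a <= 2 ^ n)%nat) ->
    (totient (totient (2 ^ n)) + 2 < length s)%nat ->
    exists c : nat -> Cx,
      (forall a, In a s -> algebraic (c a)) /\
      (exists a, In a s /\ c a <> C0) /\
      Clincomb s c Hv = C0.
Proof.
  intros s Hnd Hin Hlen.
  set (f := (2 ^ (n - 2))%nat).
  assert (Hq : (2 ^ n = 4 * f)%nat).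
  { unfold f. replace n with (S (S (n - 2))) at 1 by lia. rewrite !Nat.pow_succ_r'. lia. }
  assert (Hf : (1 <= f)%nat) by (pose proof (Nat.pow_nonzero 2 (n - 2)); lia).
  assert (Htot : totient (totient (2 ^ n)) = f).
  { rewrite !totient_pow2 by lia.
    unfold f. f_equal. lia. }
  rewrite Hq in hH, Hin. rewrite Htot in Hlen.
  assert (Halg : forall x, cot_span (4 * f) x -> algebraic (x, 0))
    by (intros; apply cot_span_algebraic with (4 * f)%nat; auto; lia).
  apply (rat_span_dependence (cot_span (4 * f)) (cot_span_0 _) (cot_span_add _) (cot_span_scal _)
           PI (S f) (H_generator f Hv) Halg); auto; [| lia].
  intros a Ha. apply (span_H_all f Hv Hf hH (n - 2)); auto.
Qed.
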